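(* Assume problem (P$_{\mathrm{fin}}$) has an optimal solution. Then there exist an optimal solution $\{p_{k,i},\delta_{k,i}\}$ of (P$_{\mathrm{fin}}$) and nonnegative numbers $\gamma_{k,i},\epsilon_{k,i}$ with $\delta_{k,i}=\gamma_{k,i}+\epsilon_{k,i}$ such that $\{p_{k,i},\gamma_{k,i},\epsilon_{k,i}\}$ is a partially procrastinating policy.
   Context: Two-way channel with finite batteries. There are two nodes $T_1,T_2$, $N$ unit-length slots, channel gains $h_1,h_2>0$, noise powers $\sigma_1^2,\sigma_2^2>0$, efficiencies $\alpha_1,\alpha_2\in[0,1]$, harvested energies $E_{k,i}\ge0$, and battery capacities $E_k^{\max}\in(0,\infty)$. A power policy is $\{p_{k,i},\delta_{k,i}\}$. Here $p_{k,i}\ge0$ is the transmit power of $T_k$ in slot $i$, and $\delta_{k,i}\ge0$ is the energy sent from $T_k$ to $T_j$ ($j\neq k$), of which $\alpha_k\delta_{k,i}$ is received. The battery state is $$S_{k,i}=\sum_{n=1}^i(E_{k,n}-p_{k,n}+\alpha_j\delta_{j,n}-\delta_{k,n}).$$ Let $$C(p_1,p_2)=\tfrac12\log(1+h_1p_1/\sigma_2^2)+\tfrac12\log(1+h_2p_2/\sigma_1^2).$$ Problem (P$_{\mathrm{fin}}$) is to maximize $\sum_{i=1}^N C(p_{1,i},p_{2,i})$ subject to $0\le S_{k,i}\le E_k^{\max}$, $p_{k,i}\ge0$ and $\delta_{k,i}\ge0$ for all $k=1,2$ and $i=1,\dots,N$. A policy $\{p_{k,i},\gamma_{k,i},\epsilon_{k,i}\}$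 with $\gamma_{k,i},\epsilon_{k,i}\ge0$, with transfers $\delta_{k,i}=\gamma_{k,i}+\epsilon_{k,i}$ and $S_{k,i}$ computed from these $\delta_{k,i}$, is called partially procrastinating if for all $k,j\in\{1,2\}$, $j\ne k$, and $i=1,\dots,N$: - $p_{k,i}-\alpha_j\gamma_{j,i}\ge0$; - $\gamma_{1,i}\gamma_{2,i}=0$; - $\epsilon_{k,i}(E_k^{\max}-S_{k,i})=0$. *)

From Stdlib Require Import Reals.
Open Scope R_scope.

Inductive node : Type := T1 | T2.

Definition other (k : node) : node := match k with T1 => T2 | T2 => T1 end.

Fixpoint sum1 (f : nat -> R) (i : nat) : R :=
  match i with
  | O => 0
  | S i' => sum1 f i' + f (S i')
  end.

Definition battery (alpha : node -> R) (E p delta : node -> nat -> R)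
  (k : node) (i : nat) : R :=
  sum1 (fun n => E k n - p k n + alpha (other k) * delta (other k) n - delta k n) i.

(* Per-slot sum rate C(p1,p2); h_k is the gain of T_k's link, sigma2 k = sigma_k^2. *)
Definition Crate (h sigma2 : node -> R) (p1 p2 : R) : R :=
  / 2 * ln (1 + h T1 * p1 / sigma2 T2) + / 2 * ln (1 + h T2 * p2 / sigma2 T1).

Definition objective (N : nat) (h sigma2 : node -> R) (p : node -> nat -> R) : R :=
  sum1 (fun i => Crate h sigma2 (p T1 i) (p T2 i)) N.

Definition feasible (N : nat) (alpha Emax : node -> R) (E p delta : node -> nat -> R) : Prop :=
  forall k i, (1 <= i <= N)%nat ->
    0 <= battery alpha E p delta k i /\ battery alpha E p delta k i <= Emax k /\
    0 <= p k i /\ 0 <= delta k i.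

Definition optimal (N : nat) (h sigma2 alpha Emax : node -> R) (E p delta : node -> nat -> R) : Prop :=
  feasible N alpha Emax E p delta /\
  forall p' delta', feasible N alpha Emax E p' delta' ->
    objective N h sigma2 p' <= objective N h sigma2 p.

Definition partially_procrastinating (N : nat) (alpha Emax : node -> R)
  (E p gamma eps : node -> nat -> R) : Prop :=
  forall k i, (1 <= i <= N)%nat ->
    p k i - alpha (other k) * gamma (other k) i >= 0 /\
    gamma T1 i * gamma T2 i = 0 /\
    eps k i * (Emax k - battery alpha E p (fun k' n => gamma k' n + eps k' n) k i) = 0.

From Stdlib Require Import Reals Psatz.
Open Scope R_scope.

(* Only the transfers are changed, so optimality is kept as long as feasibility is.
   The transfers are procrastinated: at the end of every slot each node holds back as much
   of its pending outgoing energy as the battery bounds of that slot allow (lexicographically,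
   node 1 first). Afterwards a node transfers only if it ends the slot with a full battery or
   the receiver ends it empty, and never do both nodes transfer while neither battery is full.
   Transfers from a full battery form [eps]; every other transfer ([gamma]) goes to an empty
   receiver that sends nothing itself, hence is spent on transmission at once. *)

Definition cap (a beta c : R) : R :=
  if Req_EM_T a 0 then c else Rmin c (beta / a).

Lemma cap_ge0 a beta c : 0 <= a -> 0 <= beta -> 0 <= c -> 0 <= cap a beta c.
Proof.
intros. unfold cap; destruct (Req_EM_T a 0); [lra|].
apply Rmin_glb; [lra|].
unfold Rdiv; apply Rmult_le_pos; [lra|]. apply Rlt_le, Rinv_0_lt_compat; lra.
Qed.

Lemma cap_le a beta c : cap a beta c <= c.
Proof. unfold cap; destruct (Req_EM_T a 0); [lra|apply Rmin_l]. Qed.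

Lemma cap_mul_le a beta c : 0 <= a -> 0 <= beta -> a * cap a beta c <= beta.
Proof.
intros. unfold cap; destruct (Req_EM_T a 0) as [->|a_neq0]; [lra|].
assert (a * (beta / a) = beta) by (field; lra).
pose proof (Rmin_r c (beta / a)). nra.
Qed.

Lemma cap_cases a beta c :
  0 <= a -> cap a beta c = c \/ (0 < a /\ a * cap a beta c = beta).
Proof.
intros. unfold cap; destruct (Req_EM_T a 0) as [->|a_neq0]; [now left|].
unfold Rmin; destruct (Rle_dec c (beta / a)); [now left|].
right; split; [lra|field; lra].
Qed.

Lemma cap_greatest a beta c x :
  0 <= a -> x <= c -> a * x <= beta -> x <= cap a beta c.
Proof.
intros. unfold cap; destruct (Req_EM_T a 0); [lra|].
apply Rmin_glb; [lra|].
apply (Rmult_le_reg_l a); [lra|]. replace (a * (beta / a)) with beta by (field; lra).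
lra.
Qed.

Lemma exists_pos_le4 r1 r2 r3 r4 : 0 < r1 -> 0 < r2 -> 0 < r3 -> 0 < r4 ->
  exists e, 0 < e /\ e <= r1 /\ e <= r2 /\ e <= r3 /\ e <= r4.
Proof.
intros. exists (Rmin (Rmin r1 r2) (Rmin r3 r4)).
repeat split; unfold Rmin; repeat destruct Rle_dec; lra.
Qed.

Section Slot.
(* One slot: [S1], [S2] are the batteries of the given schedule, [d1], [d2] the pending
   transfers, [M1], [M2] the capacities and [a], [b] the efficiencies; holding back [x] and [y]
   turns the batteries into [S1 + x - b * y] and [S2 + y - a * x]. *)
Variables (a b M1 M2 S1 S2 d1 d2 : R).

Definition slot_feasible (x y : R) : Prop :=
  0 <= x <= d1 /\ 0 <= y <= d2 /\
  0 <= S1 + x - b * y <= M1 /\ 0 <= S2 + y - a * x <= M2.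

Definition slot_lexmax (x y : R) : Prop :=
  slot_feasible x y /\
  (forall x' y', slot_feasible x' y' -> x' <= x) /\
  (forall y', slot_feasible x y' -> y' <= y).

Hypotheses (a_rng : 0 <= a <= 1) (b_rng : 0 <= b <= 1).

Section Lexmax.
Variables (x y : R).
Hypothesis xy_max : slot_lexmax x y.

Lemma lexmax_first_blocked :
  x < d1 -> S1 + x - b * y = M1 \/ S2 + y - a * x = 0.
Proof.
destruct xy_max as [[x_rng [y_rng [F1_rng F2_rng]]] [x_max _]].
intros x_lt. destruct (Req_dec (S1 + x - b * y) M1) as [|F1_neq]; [now left|].
destruct (Req_dec (S2 + y - a * x) 0) as [|F2_neq]; [now right|].
exfalso.
destruct (exists_pos_le4 (d1 - x) (M1 - (S1 + x - b * y)) (S2 + y - a * x) (d1 - x))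
  as [e [e_pos [e1 [e2 [e3 _]]]]]; try lra.
enough (x + e <= x) by lra.
apply (x_max _ y); repeat split; nra.
Qed.

Lemma lexmax_second_blocked :
  y < d2 -> S2 + y - a * x = M2 \/ S1 + x - b * y = 0.
Proof.
destruct xy_max as [[x_rng [y_rng [F1_rng F2_rng]]] [_ y_max]].
intros y_lt. destruct (Req_dec (S2 + y - a * x) M2) as [|F2_neq]; [now left|].
destruct (Req_dec (S1 + x - b * y) 0) as [|F1_neq]; [now right|].
exfalso.
destruct (exists_pos_le4 (d2 - y) (M2 - (S2 + y - a * x)) (S1 + x - b * y) (d2 - y))
  as [e [e_pos [e1 [e2 [e3 _]]]]]; try lra.
enough (y + e <= y) by lra.
apply y_max; repeat split; nra.
Qed.

(* Holding back [e] more on both sides changes the batteries by [(1 - b) e] and [(1 - a) e]. *)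
Lemma lexmax_not_both_free :
  ~ (x < d1 /\ y < d2 /\ S1 + x - b * y < M1 /\ S2 + y - a * x < M2).
Proof.
destruct xy_max as [[x_rng [y_rng [F1_rng F2_rng]]] [x_max _]].
intros [x_lt [y_lt [F1_lt F2_lt]]].
destruct (exists_pos_le4 (d1 - x) (d2 - y) (M1 - (S1 + x - b * y)) (M2 - (S2 + y - a * x)))
  as [e [e_pos [e1 [e2 [e3 e4]]]]]; try lra.
enough (x + e <= x) by lra.
apply (x_max _ (y + e)); repeat split; nra.
Qed.

End Lexmax.

(* [x] is capped by [x <= d1], by [S1 + x - b * y <= M1] and [0 <= S2 + y - a * x] taken at
   [y = d2], and by eliminating [y] between the two upper battery bounds; [y] is then the
   largest value feasible together with [x]. *)
Definition slot_solve : R * R :=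
  let x := cap (1 - a * b) (M1 - S1 + b * (M2 - S2))
             (cap a (S2 + d2) (Rmin d1 (M1 - S1 + b * d2))) in
  (x, cap b (S1 + x) (Rmin d2 (M2 - S2 + a * x))).

Hypotheses (S1_rng : 0 <= S1 <= M1) (S2_rng : 0 <= S2 <= M2)
  (d1_ge0 : 0 <= d1) (d2_ge0 : 0 <= d2).

Lemma slot_solve_lexmax : slot_lexmax (fst slot_solve) (snd slot_solve).
Proof.
unfold slot_solve; simpl.
set (c1 := Rmin d1 (M1 - S1 + b * d2)).
assert (c1_rng : 0 <= c1 <= d1 /\ c1 <= M1 - S1 + b * d2).
{ unfold c1; split; [split; [apply Rmin_glb; nra|apply Rmin_l]|apply Rmin_r]. }
set (c2 := cap a (S2 + d2) c1).
assert (c2_rng : 0 <= c2 <= c1 /\ a * c2 <= S2 + d2).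
{ unfold c2; repeat split; [apply cap_ge0|apply cap_le|apply cap_mul_le]; lra. }
set (x := cap (1 - a * b) (M1 - S1 + b * (M2 - S2)) c2).
assert (x_rng : 0 <= x <= c2 /\ (1 - a * b) * x <= M1 - S1 + b * (M2 - S2)).
{ unfold x; repeat split; [apply cap_ge0|apply cap_le|apply cap_mul_le]; nra. }
set (c3 := Rmin d2 (M2 - S2 + a * x)).
assert (c3_rng : 0 <= c3 <= d2 /\ c3 <= M2 - S2 + a * x).
{ unfold c3; split; [split; [apply Rmin_glb; nra|apply Rmin_l]|apply Rmin_r]. }
assert (c3_cases : c3 = d2 \/ c3 = M2 - S2 + a * x).
{ unfold c3, Rmin; destruct Rle_dec; auto. }
set (y := cap b (S1 + x) c3).
assert (y_rng : 0 <= y <= c3 /\ b * y <= S1 + x).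
{ unfold y; repeat split; [apply cap_ge0|apply cap_le|apply cap_mul_le]; lra. }
assert (y_cases : y = c3 \/ (0 < b /\ b * y = S1 + x)) by (apply cap_cases; lra).
split; [|split].
- repeat split; try lra.
  all: clearbody c3 y; destruct y_cases as [->|[b_pos by_eq]]; [destruct c3_cases as [->| ->]|]; nra.
- intros x' y' [x'_rng [y'_rng [F1_rng F2_rng]]].
  apply cap_greatest; [nra| |nra].
  apply cap_greatest; [lra| |nra].
  apply Rmin_glb; nra.
- intros y' [_ [y'_rng [F1_rng F2_rng]]].
  apply cap_greatest; [lra|apply Rmin_glb|]; lra.
Qed.

End Slot.

Lemma battery_succ alpha E p delta k n :
  battery alpha E p delta k (S n) = battery alpha E p delta k n +
    (E k (S n) - p k (S n) + alpha (other k) * delta (other k) (S n) - delta k (S n)).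
Proof. reflexivity. Qed.

Lemma battery_ext alpha E p delta delta' :
  (forall k n, delta k n = delta' k n) ->
  forall k i, battery alpha E p delta k i = battery alpha E p delta' k i.
Proof.
intros delta_eq k i; induction i as [|i IH]; [reflexivity|].
rewrite !battery_succ, IH, !delta_eq; reflexivity.
Qed.

(* Deferring, in every slot, the amounts [u k n] of the transfers of node [k] to slot [n + 1]. *)
Lemma battery_defer alpha E p delta (u : node -> nat -> R) :
  (forall k, u k O = 0) ->
  forall k i, battery alpha E p (fun k n => u k (pred n) + delta k n - u k n) k i
    = battery alpha E p delta k i + u k i - alpha (other k) * u (other k) i.
Proof.
intros u0 k i; induction i as [|i IH].
- unfold battery; simpl; rewrite !u0; ring.
- rewrite !battery_succ, IH; simpl pred; ring.
Qed.

Lemma optimal_of_feasible N h sigma2 alpha Emax E p delta delta' :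
  optimal N h sigma2 alpha Emax E p delta -> feasible N alpha Emax E p delta' ->
  optimal N h sigma2 alpha Emax E p delta'.
Proof. intros [_ p_max] feas'; split; assumption. Qed.

Lemma other_involutive k : other (other k) = k.
Proof. now destruct k. Qed.

Section Procrastination.
Variables (N : nat) (alpha Emax : node -> R) (E p delta : node -> nat -> R).

Fixpoint deferred_pair (i : nat) : R * R :=
  match i with
  | O => (0, 0)
  | S j =>
      let u := deferred_pair j in
      slot_solve (alpha T1) (alpha T2) (Emax T1) (Emax T2)
        (battery alpha E p delta T1 (S j)) (battery alpha E p delta T2 (S j))
        (fst u + delta T1 (S j)) (snd u + delta T2 (S j))
  end.

Definition deferred (k : node) (i : nat) : R :=
  match k with T1 => fst (deferred_pair i) | T2 => snd (deferred_pair i) end.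

Definition transfer (k : node) (i : nat) : R :=
  deferred k (pred i) + delta k i - deferred k i.

Lemma battery_transfer k i :
  battery alpha E p transfer k i
  = battery alpha E p delta k i + deferred k i - alpha (other k) * deferred (other k) i.
Proof. apply battery_defer; now intros []. Qed.

Hypotheses (alpha_rng : forall k, 0 <= alpha k <= 1) (Emax_pos : forall k, 0 < Emax k)
  (E_ge0 : forall k i, 0 <= E k i) (feas : feasible N alpha Emax E p delta).

Definition deferral_lexmax (j : nat) : Prop :=
  slot_lexmax (alpha T1) (alpha T2) (Emax T1) (Emax T2)
    (battery alpha E p delta T1 (S j)) (battery alpha E p delta T2 (S j))
    (deferred T1 j + delta T1 (S j)) (deferred T2 j + delta T2 (S j))
    (deferred T1 (S j)) (deferred T2 (S j)).

Lemma deferral_lexmax_of_ge0 j : (S j <= N)%nat ->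
  0 <= deferred T1 j -> 0 <= deferred T2 j -> deferral_lexmax j.
Proof.
intros j_lt u1_ge0 u2_ge0.
destruct (feas T1 (S j)) as [S1_ge0 [S1_le [_ d1_ge0]]]; [lia|].
destruct (feas T2 (S j)) as [S2_ge0 [S2_le [_ d2_ge0]]]; [lia|].
apply slot_solve_lexmax; auto; lra.
Qed.

Lemma deferred_lexmax j : (S j <= N)%nat -> deferral_lexmax j.
Proof.
induction j as [|j IH]; intros j_lt; apply deferral_lexmax_of_ge0; try (simpl; lra); try lia.
all: destruct (IH ltac:(lia)) as [[u1_rng [u2_rng _]] _]; lra.
Qed.

Lemma transfer_ge0 k i : (1 <= i <= N)%nat -> 0 <= transfer k i.
Proof.
intros i_rng; destruct i as [|j]; [lia|].
destruct (deferred_lexmax j) as [[u1_rng [u2_rng _]] _]; [lia|].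
unfold transfer; simpl pred; destruct k; lra.
Qed.

Lemma battery_transfer_bounds k i : (i <= N)%nat ->
  0 <= battery alpha E p transfer k i <= Emax k.
Proof.
intros i_le; rewrite battery_transfer; destruct i as [|j].
- unfold battery; simpl; pose proof (Emax_pos k); destruct k; simpl; lra.
- destruct (deferred_lexmax j) as [[_ [_ [F1_rng F2_rng]]] _]; [lia|].
  destruct k; simpl other; lra.
Qed.

Lemma transfer_blocked k i : (1 <= i <= N)%nat -> 0 < transfer k i ->
  battery alpha E p transfer k i = Emax k \/
  battery alpha E p transfer (other k) i = 0.
Proof.
intros i_rng t_pos; destruct i as [|j]; [lia|].
unfold transfer in t_pos; simpl pred in t_pos.
rewrite !battery_transfer.
pose proof (deferred_lexmax j ltac:(lia)) as u_max.
destruct k; simpl other.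
- eapply lexmax_first_blocked; [apply alpha_rng|exact u_max|lra].
- eapply lexmax_second_blocked; [apply alpha_rng|exact u_max|lra].
Qed.

Lemma transfers_not_both_free k i : (1 <= i <= N)%nat ->
  ~ (0 < transfer k i /\ 0 < transfer (other k) i /\
     battery alpha E p transfer k i < Emax k /\
     battery alpha E p transfer (other k) i < Emax (other k)).
Proof.
intros i_rng; destruct i as [|j]; [lia|].
unfold transfer; simpl pred; rewrite !battery_transfer.
pose proof (lexmax_not_both_free _ _ _ _ _ _ _ _ (alpha_rng T1) (alpha_rng T2) _ _
  (deferred_lexmax j ltac:(lia))).
destruct k; simpl other; lra.
Qed.

Definition transfer_used (k : node) (i : nat) : R :=
  if Req_EM_T (battery alpha E p transfer k i) (Emax k) then 0 else transfer k i.

Definition transfer_overflow (k : node) (i : nat) : R :=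
  if Req_EM_T (battery alpha E p transfer k i) (Emax k) then transfer k i else 0.

Lemma transfer_used_add_overflow k i :
  transfer_used k i + transfer_overflow k i = transfer k i.
Proof. unfold transfer_used, transfer_overflow; destruct Req_EM_T; ring. Qed.

Lemma battery_used_add_overflow k i :
  battery alpha E p (fun k' n => transfer_used k' n + transfer_overflow k' n) k i
  = battery alpha E p transfer k i.
Proof. apply battery_ext, transfer_used_add_overflow. Qed.

Lemma transfer_used_ge0 k i : (1 <= i <= N)%nat -> 0 <= transfer_used k i.
Proof.
intros i_rng; pose proof (transfer_ge0 k i i_rng).
unfold transfer_used; destruct Req_EM_T; lra.
Qed.

Lemma transfer_overflow_ge0 k i : (1 <= i <= N)%nat -> 0 <= transfer_overflow k i.
Proof.
intros i_rng; pose proof (transfer_ge0 k i i_rng).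
unfold transfer_overflow; destruct Req_EM_T; lra.
Qed.

Lemma transfer_overflow_full k i :
  transfer_overflow k i * (Emax k - battery alpha E p transfer k i) = 0.
Proof. unfold transfer_overflow; destruct Req_EM_T as [->|]; ring. Qed.

Lemma transfer_used_mul_eq0 i : (1 <= i <= N)%nat ->
  transfer_used T1 i * transfer_used T2 i = 0.
Proof.
intros i_rng.
pose proof (transfer_ge0 T1 i i_rng); pose proof (transfer_ge0 T2 i i_rng).
pose proof (transfers_not_both_free T1 i i_rng) as not_free; simpl other in not_free.
destruct (battery_transfer_bounds T1 i ltac:(lia)); destruct (battery_transfer_bounds T2 i ltac:(lia)).
unfold transfer_used; do 2 destruct Req_EM_T; try ring.
destruct (Rle_lt_dec (transfer T1 i) 0); [replace (transfer T1 i) with 0 by lra; ring|].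
destruct (Rle_lt_dec (transfer T2 i) 0); [replace (transfer T2 i) with 0 by lra; ring|].
exfalso; apply not_free; repeat split; lra.
Qed.

(* A used transfer into [k] leaves [k] empty, so [k] sends nothing in that slot and spends
   all it receives. *)
Lemma power_ge_received_used k i : (1 <= i <= N)%nat ->
  p k i - alpha (other k) * transfer_used (other k) i >= 0.
Proof.
intros i_rng.
destruct (feas k i i_rng) as [_ [_ [p_ge0 _]]].
pose proof (alpha_rng (other k)).
unfold transfer_used; destruct Req_EM_T as [|not_full]; [lra|].
destruct (transfer_ge0 (other k) i i_rng) as [t_pos|t_eq0]; [|rewrite <- t_eq0; lra].
destruct (transfer_blocked (other k) i i_rng t_pos) as [|k_empty]; [contradiction|].
rewrite other_involutive in k_empty.
assert (t_k_eq0 : transfer k i = 0).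
{ destruct (transfer_ge0 k i i_rng) as [t_k_pos|]; [exfalso|lra].
  destruct (battery_transfer_bounds (other k) i ltac:(lia)).
  apply (transfers_not_both_free k i i_rng); repeat split; try lra.
  pose proof (Emax_pos k); lra. }
destruct i as [|j]; [lia|].
rewrite battery_succ, t_k_eq0 in k_empty.
destruct (battery_transfer_bounds k j ltac:(lia)).
pose proof (E_ge0 k (S j)); lra.
Qed.

Lemma transfer_feasible : feasible N alpha Emax E p transfer.
Proof.
intros k i i_rng.
destruct (battery_transfer_bounds k i ltac:(lia)).
destruct (feas k i i_rng) as [_ [_ [p_ge0 _]]].
pose proof (transfer_ge0 k i i_rng); repeat split; lra.
Qed.

End Procrastination.

Theorem lemma4 (N : nat) (h sigma2 alpha Emax : node -> R) (E : node -> nat -> R)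
  (hpos : forall k, 0 < h k)
  (spos : forall k, 0 < sigma2 k)
  (alpha_rng : forall k, 0 <= alpha k <= 1)
  (Epos : forall k i, 0 <= E k i)
  (Emax_pos : forall k, 0 < Emax k)
  (hopt : exists p delta, optimal N h sigma2 alpha Emax E p delta) :
  exists p delta gamma eps : node -> nat -> R,
    optimal N h sigma2 alpha Emax E p delta /\
    (forall k i, (1 <= i <= N)%nat ->
       0 <= gamma k i /\ 0 <= eps k i /\ delta k i = gamma k i + eps k i) /\
    partially_procrastinating N alpha Emax E p gamma eps.
Proof.
destruct hopt as [p [delta opt]].
pose proof (proj1 opt) as feas.
exists p, (transfer alpha Emax E p delta),
  (transfer_used alpha Emax E p delta), (transfer_overflow alpha Emax E p delta).
split; [|split].
- eapply optimal_of_feasible; [exact opt|]. eapply transfer_feasible; eassumption.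
- intros k i i_rng; split; [|split].
  + eapply transfer_used_ge0; eassumption.
  + eapply transfer_overflow_ge0; eassumption.
  + symmetry; apply transfer_used_add_overflow.
- intros k i i_rng; split; [|split].
  + eapply power_ge_received_used; eassumption.
  + eapply transfer_used_mul_eq0; eassumption.
  + rewrite battery_used_add_overflow; apply transfer_overflow_full.
Qed.
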